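(* Assume that $d^u_{ij}-\nu s_{ij}\ge 0$ and $d^p_{ij}\ge 0$ for all $j\neq i$ (the entries $d^u_{ij}$ evaluated at the current solution). Let $\mathbf u_i(t)\in\mathbb R^d$ (continuously differentiable) and $p_i(t)\in\mathbb R$, $i=1,\dots,N_h$, solve the semi-discrete scheme (S1)–(S2) on a time interval. For $i\neq j$ define $$F_{ij}=\frac{\tilde a_{ij}}{2}|\mathbf u_j-\mathbf u_i|^2+\frac12\,\mathbf c_{ij}\cdot(\mathbf u_j-\mathbf u_i)\,(p_j-p_i)-\Big(\frac{\mathbf u_j+\mathbf u_i}{2}\cdot\mathbf c_{ij}\Big)\Big(\frac{|\mathbf u_j|^2}{2}+p_j+\frac{|\mathbf u_i|^2}{2}+p_i\Big)+(d^u_{ij}-\nu s_{ij})\Big(\frac{|\mathbf u_j|^2}{2}-\frac{|\mathbf u_i|^2}{2}\Big)+d^p_{ij}\Big(\frac{p_j^2}{2}-\frac{p_i^2}{2}\Big),$$ $$G_{ij}=-(d^u_{ij}-\nu s_{ij})\frac{|\mathbf u_j-\mathbf u_i|^2}{2}-d^p_{ij}\frac{(p_j-p_i)^2}{2}.$$ Then: (i) $F_{ij}=-F_{ji}$ and $G_{ij}=G_{ji}$; (ii) for every $i$, $$m_i\frac{d}{dt}\eta(\mathbf u_i)=\sum_{j\in\mathcal N_i\setminus\{i\}}\big(F_{ij}+G_{ij}\big),\qquad\text{hence}\qquad m_i\frac{d}{dt}\eta(\mathbf u_i)-\sum_{j\in\mathcal N_i\setminus\{i\}}F_{ij}\le 0;$$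 (iii) whenever $\mathbf c_{ij}\neq 0$, the numerical energy flux $\mathcal Q(\mathbf u_i,p_i,\mathbf u_j,p_j;\mathbf n_{ij}):=-F_{ij}/(2|\mathbf c_{ij}|)$, $\mathbf n_{ij}=\mathbf c_{ij}/|\mathbf c_{ij}|$, is consistent with the energy flux in the sense that for $\mathbf u_i=\mathbf u_j=\mathbf u$, $p_i=p_j=p$ it equals $(\eta(\mathbf u)+p)\,\mathbf u\cdot\mathbf n_{ij}$. Consequently $m_i\frac{d}{dt}\eta(\mathbf u_i)+\sum_{j\in\mathcal N_i\setminus\{i\}}2|\mathbf c_{ij}|\,\mathcal Q(\mathbf u_i,p_i,\mathbf u_j,p_j;\mathbf n_{ij})\le 0$ (sum over $j$ with $\mathbf c_{ij}\ne0$, the remaining $F_{ij}$ being included as $-F_{ij}$).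
   Context: Setting. Let $d\in\{2,3\}$ and let $\Omega\subset\mathbb R^d$ be a box on which periodic boundary conditions are imposed (all functions on $\Omega$ are periodic, so $\Omega$ is effectively a flat torus and integration by parts produces no boundary terms). $\mathcal T_h$ is a conforming simplicial mesh of $\Omega$ compatible with periodicity, with (periodically identified) vertices $\mathbf x_1,\dots,\mathbf x_{N_h}$; $\varphi_1,\dots,\varphi_{N_h}$ are the continuous piecewise-linear Lagrange basis functions ($\varphi_i(\mathbf x_j)=\delta_{ij}$), $V_h=\mathrm{span}\{\varphi_i\}$, $\mathbf V_h=(V_h)^d$. For $v_h\in V_h$ write $v_i=v_h(\mathbf x_i)$; similarly $\mathbf u_h=\sum_j\mathbf u_j\varphi_j$ for vector-valued functions. $\mathcal N_i$ is the set of indices $j$ (including $j=i$) for which the supports of $\varphi_i,\varphi_j$ overlap. Coefficients: $m_{ij}=\int_\Omega\varphi_i\varphi_j\,dx$, $m_i=\int_\Omega\varphi_i\,dx$, $\mathbf c_{ij}=\int_\Omega\varphi_i\nabla\varphi_j\,dx$, $s_{ij}=\int_\Omega\nabla\varphi_i\cdot\nabla\varphi_j\,dx$, and, for a given $\mathbf u_h=\sum_j\mathbf u_j\varphi_j$, $\tilde a_{ij}=\frac{\mathbf u_i+\mathbf u_j}{2}\cdot\mathbf c_{ij}$ and $a_{ij}=\frac12\int_\Omega[\varphi_i\,\mathbf u_h\cdot\nabla\varphi_j-\varphi_j\,\mathbf u_h\cdot\nabla\varphi_i]\,dx$. The kinetic energy is $\eta(\mathbf u)=|\mathbf u|^2/2$.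 Scheme. Given a viscosity $\nu\ge 0$ and symmetric matrices $D^u=(d^u_{ij})$, $D^p=(d^p_{ij})$ with zero row sums ($\sum_j d^u_{ij}=\sum_j d^p_{ij}=0$) and $d^u_{ij}=d^p_{ij}=0$ for $j\notin\mathcal N_i$ (the entries $d^u_{ij}$ may depend on the current velocity), the semi-discrete scheme is the system, for all $i,k=1,\dots,N_h$, (S1) $m_i\frac{d\mathbf u_i}{dt}=\sum_{j\in\mathcal N_i}\big[(d^u_{ij}-\tilde a_{ij}-\nu s_{ij})\mathbf u_j-\mathbf c_{ij}p_j\big]$, (S2) $0=\sum_{j\in\mathcal N_k}\big[d^p_{kj}p_j-\mathbf c_{kj}\cdot\mathbf u_j\big]$, where $\tilde a_{ij}$ is computed from the current $\mathbf u_h(t)$. *)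

From HB Require Import structures.
From mathcomp Require Import all_boot all_order all_algebra.
From mathcomp Require Import all_classical all_reals all_analysis.
Set Implicit Arguments. Unset Strict Implicit. Unset Printing Implicit Defensive.
Import Order.TTheory GRing.Theory Num.Theory.
Import numFieldNormedType.Exports.
Local Open Scope ring_scope.

(* Vectors of R^d are row vectors 'rV[R]_d; components x 0 k. *)
Definition dotv {R : pzRingType} {d : nat} (x y : 'rV[R]_d) : R :=
  \sum_(k < d) x 0 k * y 0 k.
Definition sqn {R : pzRingType} {d : nat} (x : 'rV[R]_d) : R := dotv x x.
Definition enorm {R : rcfType} {d : nat} (x : 'rV[R]_d) : R := Num.sqrt (sqn x).
Definition kin_energy {R : fieldType} {d : nat} (u : 'rV[R]_d) : R := sqn u / 2.

Definition atil {R : fieldType} {d : nat} (cij ui uj : 'rV[R]_d) : R :=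
  dotv ((2 : R)^-1 *: (ui + uj)) cij.

Definition Fij {R : fieldType} {d : nat} (cij : 'rV[R]_d) (duij sij dpij nu : R)
  (ui : 'rV[R]_d) (pi : R) (uj : 'rV[R]_d) (pj : R) : R :=
  atil cij ui uj / 2 * sqn (uj - ui)
  + (2 : R)^-1 * dotv cij (uj - ui) * (pj - pi)
  - dotv ((2 : R)^-1 *: (uj + ui)) cij * (sqn uj / 2 + pj + sqn ui / 2 + pi)
  + (duij - nu * sij) * (sqn uj / 2 - sqn ui / 2)
  + dpij * (pj ^+ 2 / 2 - pi ^+ 2 / 2).

Definition Gij {R : fieldType} {d : nat} (duij sij dpij nu : R)
  (ui : 'rV[R]_d) (pi : R) (uj : 'rV[R]_d) (pj : R) : R :=
  - (duij - nu * sij) * (sqn (uj - ui) / 2) - dpij * ((pj - pi) ^+ 2 / 2).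

Definition Qflux {R : rcfType} {d : nat} (cij : 'rV[R]_d) (duij sij dpij nu : R)
  (ui : 'rV[R]_d) (pi : R) (uj : 'rV[R]_d) (pj : R) : R :=
  - Fij cij duij sij dpij nu ui pi uj pj / (2 * enorm cij).

Definition nvec {R : rcfType} {d : nat} (cij : 'rV[R]_d) : 'rV[R]_d :=
  (enorm cij)^-1 *: cij.

Definition vderiv {R : realType} {d : nat} (f : R -> 'rV[R]_d) (t : R) : 'rV[R]_d :=
  \row_(k < d) derive1 (fun tau => f tau 0 k) t.

From HB Require Import structures.
From mathcomp Require Import all_boot all_order all_algebra.
From mathcomp Require Import all_classical all_reals all_analysis.
From mathcomp Require Import ring.
Import Order.TTheory GRing.Theory Num.Theory.
Import numFieldNormedType.Exports.
Local Open Scope ring_scope.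
Local Open Scope classical_set_scope.

(* Test (S1) against u_i and (S2) against p_i.  Edge by edge, the sum of
   the two tested terms differs from F_ij + G_ij only by multiples of
   d^u_ij, s_ij and d^p_ij whose coefficients do not depend on j; these
   vanish after summation over N_i because of the zero row sums, and the
   diagonal term j = i vanishes since c_ii = 0.  F_ij is antisymmetric,
   and G_ij <= 0 by the sign assumptions, which gives the energy
   inequality. *)

Section DotProduct.
Variables (R : comPzRingType) (d : nat).
Implicit Types x y z : 'rV[R]_d.

Lemma dotvC x y : dotv x y = dotv y x.
Proof. by apply: eq_bigr => k _; rewrite mulrC. Qed.

Lemma dotvDl x y z : dotv (x + y) z = dotv x z + dotv y z.
Proof. by rewrite /dotv -big_split; apply: eq_bigr => k _; rewrite mxE mulrDl. Qed.

Lemma dotvZl a x y : dotv (a *: x) y = a * dotv x y.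
Proof. by rewrite /dotv mulr_sumr; apply: eq_bigr => k _; rewrite mxE mulrA. Qed.

Lemma dotvNl x y : dotv (- x) y = - dotv x y.
Proof. by rewrite -scaleN1r dotvZl mulN1r. Qed.

Lemma dotvBl x y z : dotv (x - y) z = dotv x z - dotv y z.
Proof. by rewrite dotvDl dotvNl. Qed.

Lemma dotvDr x y z : dotv z (x + y) = dotv z x + dotv z y.
Proof. by rewrite dotvC dotvDl !(dotvC z). Qed.

Lemma dotvZr a x y : dotv y (a *: x) = a * dotv y x.
Proof. by rewrite dotvC dotvZl dotvC. Qed.

Lemma dotvNr x y : dotv y (- x) = - dotv y x.
Proof. by rewrite dotvC dotvNl dotvC. Qed.

Lemma dotvBr x y z : dotv z (x - y) = dotv z x - dotv z y.
Proof. by rewrite dotvDr dotvNr. Qed.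

Lemma dotv0l x : dotv 0 x = 0.
Proof. by rewrite -(scale0r 0) dotvZl mul0r. Qed.

Lemma dotv0r x : dotv x 0 = 0.
Proof. by rewrite dotvC dotv0l. Qed.

Lemma dotv_sumr I (r : seq I) (P : pred I) (F : I -> 'rV[R]_d) x :
  dotv x (\sum_(j <- r | P j) F j) = \sum_(j <- r | P j) dotv x (F j).
Proof.
by elim/big_rec2: _ => [|j a b _ <-]; rewrite ?dotv0r ?dotvDr.
Qed.

End DotProduct.

Arguments dotvC {R d} x y.

Lemma sqn_ge0 (R : realFieldType) d (x : 'rV[R]_d) : 0 <= sqn x.
Proof. by apply: sumr_ge0 => k _; rewrite -expr2 sqr_ge0. Qed.

Lemma sqn_eq0 (R : realFieldType) d (x : 'rV[R]_d) : (sqn x == 0) = (x == 0).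
Proof.
apply/idP/eqP => [|->]; last by rewrite /sqn /dotv big1 // => k _; rewrite mxE mul0r.
rewrite /sqn /dotv psumr_eq0 => [/allP x0|k _]; last by rewrite -expr2 sqr_ge0.
apply/rowP => k; rewrite mxE.
by have /implyP/(_ isT) := x0 k (mem_index_enum k); rewrite mulf_eq0 orbb => /eqP.
Qed.

Lemma enorm_eq0 (R : rcfType) d (x : 'rV[R]_d) : (enorm x == 0) = (x == 0).
Proof. by rewrite /enorm sqrtr_eq0 le_eqVlt ltNge sqn_ge0 orbF sqn_eq0. Qed.

Lemma row_eqN_eq0 (R : numFieldType) d (x : 'rV[R]_d) : x = - x -> x = 0.
Proof.
move=> xN; have /eqP : (2 : R) *: x = 0 by rewrite scaler_nat mulr2n {2}xN addrN.
by rewrite scaler_eq0 pnatr_eq0 => /eqP.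
Qed.

Lemma derive1_kin_energy (R : realType) d (f : R -> 'rV[R]_d) t :
  (forall k, derivable (fun tau => f tau 0 k) t 1) ->
  derive1 (fun tau => kin_energy (f tau)) t = dotv (f t) (vderiv f t).
Proof.
move=> df.
have dsq k : is_derive t 1 (fun tau => f tau 0 k * f tau 0 k)
    (f t 0 k *: derive1 (fun tau => f tau 0 k) t
     + f t 0 k *: derive1 (fun tau => f tau 0 k) t).
  have := derivableP (df k); rewrite -derive1E => dfk.
  exact: (@is_deriveM _ _ (fun tau => f tau 0 k) (fun tau => f tau 0 k)).
have -> : (fun tau => kin_energy (f tau)) =
    (\sum_(k < d) (fun tau => f tau 0 k * f tau 0 k)) * cst (2 : R)^-1.
  apply/funext => tau; rewrite /kin_energy /sqn /dotv /= fct_sumE.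
  by rewrite mulrC [in RHS]mulrC.
have := is_deriveM (is_derive_sum dsq) (is_derive_cst (2 : R)^-1 t 1).
rewrite derive1E => ?; rewrite derive_val scaler0 add0r scaler_sumr.
by apply: eq_bigr => k _; rewrite mxE /GRing.scale /=; field.
Qed.

Section EdgeTerms.
Variables (R : realFieldType) (d : nat).
Variables (Du S Dp nu : R).
Implicit Types (c ui uj w : 'rV[R]_d) (pi pj q : R).

Let dotvE := (dotvDl, dotvDr, dotvBl, dotvBr, dotvNl, dotvNr, dotvZl, dotvZr).

Lemma Fij_anti c ui pi uj pj :
  Fij c Du S Dp nu ui pi uj pj = - Fij (- c) Du S Dp nu uj pj ui pi.
Proof.
rewrite /Fij /atil /sqn !dotvE (dotvC uj ui) (dotvC uj c) (dotvC ui c).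
by field.
Qed.

Lemma Gij_sym ui pi uj pj :
  Gij Du S Dp nu ui pi uj pj = Gij Du S Dp nu uj pj ui pi.
Proof. by rewrite /Gij /sqn !dotvE (dotvC uj ui); field. Qed.

Lemma Gij_le0 ui pi uj pj : 0 <= Du - nu * S -> 0 <= Dp ->
  Gij Du S Dp nu ui pi uj pj <= 0.
Proof.
move=> Du_ge0 Dp_ge0; rewrite /Gij mulNr -opprD oppr_le0.
by apply: addr_ge0; apply: mulr_ge0; rewrite ?divr_ge0 ?sqn_ge0 ?sqr_ge0.
Qed.

Lemma Fij_add_Gij c ui pi uj pj :
  Fij c Du S Dp nu ui pi uj pj + Gij Du S Dp nu ui pi uj pj =
  dotv ui ((Du - atil c ui uj - nu * S) *: uj - pj *: c)
  + pi * (Dp * pj - dotv c uj) - (sqn ui * (Du - nu * S) + pi ^+ 2 * Dp).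
Proof.
rewrite /Fij /Gij /atil /sqn !dotvE.
rewrite (dotvC uj ui) (dotvC uj c) (dotvC ui c).
by field.
Qed.

Lemma Fij_add_Gij_diag w q :
  Fij 0 Du S Dp nu w q w q + Gij Du S Dp nu w q w q = 0.
Proof.
rewrite Fij_add_Gij /atil !(dotv0l, dotv0r, scaler0, subr0) dotvZr /sqn.
by ring.
Qed.

End EdgeTerms.

Section EnergyFlux.
Variables (R : rcfType) (d : nat).
Variables (Du S Dp nu : R).
Implicit Types (c ui uj w : 'rV[R]_d) (pi pj q : R).

Lemma Qflux_consistent c w q : c != 0 ->
  Qflux c Du S Dp nu w q w q = (kin_energy w + q) * dotv w (nvec c).
Proof.
rewrite -enorm_eq0 => c_neq0.
rewrite /Qflux /Fij /nvec /kin_energy /atil /sqn subrr.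
rewrite !(dotv0l, dotv0r, dotvDl, dotvZl, dotvZr).
by rewrite (dotvC w c); field.
Qed.

Lemma Qflux_scaled c ui pi uj pj : c != 0 ->
  2 * enorm c * Qflux c Du S Dp nu ui pi uj pj = - Fij c Du S Dp nu ui pi uj pj.
Proof. by rewrite -enorm_eq0 => c_neq0; rewrite /Qflux; field. Qed.

End EnergyFlux.

Lemma node_energy_balance {R : realFieldType} {d N : nat} (nbr : rel 'I_N)
    (c : 'I_N -> 'I_N -> 'rV[R]_d) (S Du Dp : 'I_N -> 'I_N -> R) (nu : R)
    (U : 'I_N -> 'rV[R]_d) (P : 'I_N -> R) (i : 'I_N) :
  nbr i i -> c i i = 0 ->
  \sum_(j | nbr i j) Du i j = 0 -> \sum_(j | nbr i j) S i j = 0 ->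
  \sum_(j | nbr i j) Dp i j = 0 ->
  \sum_(j | nbr i j) (Dp i j * P j - dotv (c i j) (U j)) = 0 ->
  dotv (U i) (\sum_(j | nbr i j)
    ((Du i j - atil (c i j) (U i) (U j) - nu * S i j) *: U j - P j *: c i j))
  = \sum_(j | nbr i j && (j != i))
      (Fij (c i j) (Du i j) (S i j) (Dp i j) nu (U i) (P i) (U j) (P j)
       + Gij (Du i j) (S i j) (Dp i j) nu (U i) (P i) (U j) (P j)).
Proof.
move=> nbr_ii c_ii Du0 S0 Dp0 div0.
rewrite [RHS](_ : _ = \sum_(j | nbr i j)
  (Fij (c i j) (Du i j) (S i j) (Dp i j) nu (U i) (P i) (U j) (P j)
   + Gij (Du i j) (S i j) (Dp i j) nu (U i) (P i) (U j) (P j))); last first.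
  by rewrite [in RHS](bigD1 i) //= c_ii [in RHS]Fij_add_Gij_diag add0r.
apply/esym; under eq_bigr => j _ do rewrite Fij_add_Gij.
rewrite sumrB big_split /= -dotv_sumr -(mulr_sumr _ _ _ (P i)) div0 mulr0 addr0.
suff -> : \sum_(j | nbr i j)
    (sqn (U i) * (Du i j - nu * S i j) + P i ^+ 2 * Dp i j) = 0 by rewrite subr0.
rewrite big_split /= -!mulr_sumr sumrB -mulr_sumr Du0 S0 Dp0.
by rewrite !(mulr0, subr0) addr0.
Qed.

Theorem theorem1
  (R : realType) (d N : nat) (hd : (d == 2)%N || (d == 3)%N)
  (* mesh data: neighbourhood relation j \in N_i and the FE coefficients *)
  (nbr : 'I_N -> 'I_N -> bool)
  (m : 'I_N -> R) (c : 'I_N -> 'I_N -> 'rV[R]_d) (s : 'I_N -> 'I_N -> R)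
  (Hnbr_refl : forall i, nbr i i)
  (Hnbr_sym : forall i j, nbr i j = nbr j i)
  (Hm : forall i, 0 < m i)
  (Hc_anti : forall i j, c i j = - c j i)
  (Hc_sum : forall i, \sum_(j < N) c i j = 0)
  (Hc_supp : forall i j, ~~ nbr i j -> c i j = 0)
  (Hs_sym : forall i j, s i j = s j i)
  (Hs_sum : forall i, \sum_(j < N) s i j = 0)
  (Hs_supp : forall i j, ~~ nbr i j -> s i j = 0)
  (* viscosity and stabilization matrices *)
  (nu : R) (Hnu : 0 <= nu)
  (du : ('I_N -> 'rV[R]_d) -> 'I_N -> 'I_N -> R)
  (dp : 'I_N -> 'I_N -> R)
  (Hdu_sym : forall U i j, du U i j = du U j i)
  (Hdu_sum : forall U i, \sum_(j < N) du U i j = 0)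
  (Hdu_supp : forall U i j, ~~ nbr i j -> du U i j = 0)
  (Hdp_sym : forall i j, dp i j = dp j i)
  (Hdp_sum : forall i, \sum_(j < N) dp i j = 0)
  (Hdp_supp : forall i j, ~~ nbr i j -> dp i j = 0)
  (* the solution on the time interval ]a, b[ *)
  (a b : R) (Hab : a < b)
  (u : 'I_N -> R -> 'rV[R]_d) (p : 'I_N -> R -> R)
  (Hu_der : forall i (k : 'I_d) t, t \in `]a, b[ ->
      derivable (fun tau => u i tau 0 k) t 1)
  (Hu_C1 : forall i (k : 'I_d),
      {in `]a, b[, continuous (fun t : R => derive1 (fun tau => u i tau 0 k) t)})
  (* sign assumptions, d^u evaluated at the current solution *)
  (Hdu_pos : forall t, t \in `]a, b[ -> forall i j, j != i ->
      0 <= du (fun k => u k t) i j - nu * s i j)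
  (Hdp_pos : forall i j, j != i -> 0 <= dp i j)
  (* the scheme (S1)-(S2) *)
  (HS1 : forall t, t \in `]a, b[ -> forall i,
      m i *: vderiv (u i) t =
      \sum_(j < N | nbr i j)
        ((du (fun k => u k t) i j - atil (c i j) (u i t) (u j t) - nu * s i j)
           *: u j t - p j t *: c i j))
  (HS2 : forall t, t \in `]a, b[ -> forall k,
      0 = \sum_(j < N | nbr k j) (dp k j * p j t - dotv (c k j) (u j t))) :
  let F t i j := Fij (c i j) (du (fun k => u k t) i j) (s i j) (dp i j) nu
                     (u i t) (p i t) (u j t) (p j t) in
  let G t i j := Gij (du (fun k => u k t) i j) (s i j) (dp i j) nu
                     (u i t) (p i t) (u j t) (p j t) in
  let Q t i j := Qflux (c i j) (du (fun k => u k t) i j) (s i j) (dp i j) nu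
                     (u i t) (p i t) (u j t) (p j t) in
  (* (i) *)
  (forall t, t \in `]a, b[ -> forall i j, i != j ->
      F t i j = - F t j i /\ G t i j = G t j i)
  (* (ii) *)
  /\ (forall t, t \in `]a, b[ -> forall i,
      m i * derive1 (fun tau => kin_energy (u i tau)) t
        = \sum_(j < N | nbr i j && (j != i)) (F t i j + G t i j)
      /\ m i * derive1 (fun tau => kin_energy (u i tau)) t
           - \sum_(j < N | nbr i j && (j != i)) F t i j <= 0)
  (* (iii) consistency of the numerical energy flux *)
  /\ (forall t, t \in `]a, b[ -> forall i j, i != j -> c i j != 0 ->
      forall (w : 'rV[R]_d) (q : R),
        Qflux (c i j) (du (fun k => u k t) i j) (s i j) (dp i j) nu w q w q
        = (kin_energy w + q) * dotv w (nvec (c i j)))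
  (* consequence *)
  /\ (forall t, t \in `]a, b[ -> forall i,
      m i * derive1 (fun tau => kin_energy (u i tau)) t
      + \sum_(j < N | [&& nbr i j, j != i & c i j != 0]) 2 * enorm (c i j) * Q t i j
      - \sum_(j < N | [&& nbr i j, j != i & c i j == 0]) F t i j <= 0).
Proof.
move=> F G Q.
have c_diag i : c i i = 0 by apply: row_eqN_eq0; exact: Hc_anti.
have balance t : t \in `]a, b[ -> forall i,
    m i * derive1 (fun tau => kin_energy (u i tau)) t
    = \sum_(j < N | nbr i j && (j != i)) (F t i j + G t i j).
  move=> tab i; rewrite derive1_kin_energy => [|k]; last exact: Hu_der.
  rewrite -dotvZr HS1 //.
  apply: (node_energy_balance nbr c s (du (fun k => u k t)) dp nu
            (fun k => u k t) (fun k => p k t)) => //.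
  - by rewrite big_rmcond ?Hdu_sum // => j; exact: Hdu_supp.
  - by rewrite big_rmcond ?Hs_sum // => j; exact: Hs_supp.
  - by rewrite big_rmcond ?Hdp_sum // => j; exact: Hdp_supp.
  - by rewrite -(HS2 t tab i).
have energy_ineq t : t \in `]a, b[ -> forall i,
    m i * derive1 (fun tau => kin_energy (u i tau)) t
    - \sum_(j < N | nbr i j && (j != i)) F t i j <= 0.
  move=> tab i; rewrite balance // big_split /= addrAC subrr add0r.
  by apply: sumr_le0 => j /andP[_ ji]; apply: Gij_le0; [exact: Hdu_pos | exact: Hdp_pos].
split=> [t _ i j _ | ]; first split.
- by rewrite /F Fij_anti -Hc_anti Hdu_sym Hs_sym Hdp_sym.
- by rewrite /G Gij_sym Hdu_sym Hs_sym Hdp_sym.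
split=> [t tab i | ]; first by split; [exact: balance | exact: energy_ineq].
split=> [t _ i j _ c_neq0 w q | t tab i]; first exact: Qflux_consistent.
rewrite (eq_bigr (fun j => - F t i j)) => [|j /and3P[_ _ c_neq0]]; last first.
  exact: Qflux_scaled.
rewrite (eq_bigl (fun j => nbr i j && (j != i) && (c i j != 0))) => [|j]; last first.
  by rewrite andbA.
rewrite [X in _ - X](eq_bigl (fun j => nbr i j && (j != i) && ~~ (c i j != 0)))
  => [|j]; last by rewrite negbK andbA.
by rewrite sumrN -addrA -opprD -(bigID (fun j => c i j != 0)) /=; exact: energy_ineq.
Qed.
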